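(* Let $SI$, $UI$, $CI$ be a nonnegative bivariate information decomposition, let $\overline{SI}(S;X_1,X_2):=\sup_{f} SI(f(S);X_1,X_2)$ (supremum over all functions $f$ from the alphabet of $S$ to an arbitrary finite set), and define $\overline{UI}^*(S;X_1\setminus X_2):=I(S;X_1)-\overline{SI}(S;X_1,X_2)$ and $\overline{UI}^*(S;X_2\setminus X_1):=I(S;X_2)-\overline{SI}(S;X_1,X_2)$. If $UI$ has the Blackwell property, then $\overline{UI}^*$ does not have the Blackwell property.
   Context: All random variables have finite alphabets. A nonnegative bivariate information decomposition consists of nonnegative functions $SI(S;X_1,X_2)$, $UI(S;X_1\setminus X_2)$, $UI(S;X_2\setminus X_1)$, $CI(S;X_1,X_2)$, defined for every joint distribution of $(S,X_1,X_2)$ with arbitrary finite alphabets and depending continuously on it, such that $I(S;X_1X_2)=SI(S;X_1,X_2)+CI(S;X_1,X_2)+UI(S;X_1\setminus X_2)+UI(S;X_2\setminus X_1)$, $I(S;X_1)=SI(S;X_1,X_2)+UI(S;X_1\setminus X_2)$ and $I(S;X_2)=SI(S;X_1,X_2)+UI(S;X_2\setminus X_1)$, where $I$ denotes mutual information. A unique-information measure $U$ has the Blackwell property if for every joint distribution $P_{SX_1X_2}$ (with finite alphabets): $U(S;X_1\setminus X_2)=0$ if and only if there exists a random variable $X_1'$ such that $S - X_2 - X_1'$ is a Markov chain and $P_{SX_1'}=P_{SX_1}$ (i.e. the channel $S\to X_1$ is a garbling of the channel $S\to X_2$). *)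

From HB Require Import structures.
From mathcomp Require Import all_boot all_order all_algebra.
From mathcomp Require Import boolp classical_sets reals exp.
Set Implicit Arguments. Unset Strict Implicit. Unset Printing Implicit Defensive.
Import Order.TTheory GRing.Theory Num.Theory.
Local Open Scope ring_scope.

Section InfoDefs.
Variable R : realType.

Definition is_dist (T : finType) (p : {ffun T -> R}) : Prop :=
  (forall t, 0 <= p t) /\ \sum_(t : T) p t = 1.

Definition MI (A B : finType) (q : {ffun A * B -> R}) : R :=
  \sum_(ab : A * B)
    (if q ab == 0 then 0
     else q ab * ln (q ab / ((\sum_(b : B) q (ab.1, b)) * (\sum_(a : A) q (a, ab.2))))).

Definition margSX1 (S X1 X2 : finType) (p : {ffun S * X1 * X2 -> R}) : {ffun S * X1 -> R} :=
  [ffun sx => \sum_(x2 : X2) p (sx.1, sx.2, x2)].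
Definition margSX2 (S X1 X2 : finType) (p : {ffun S * X1 * X2 -> R}) : {ffun S * X2 -> R} :=
  [ffun sx => \sum_(x1 : X1) p (sx.1, x1, sx.2)].
Definition margSX12 (S X1 X2 : finType) (p : {ffun S * X1 * X2 -> R}) : {ffun S * (X1 * X2) -> R} :=
  [ffun sx => p (sx.1, sx.2.1, sx.2.2)].

Definition swap12 (S X1 X2 : finType) (p : {ffun S * X1 * X2 -> R}) : {ffun S * X2 * X1 -> R} :=
  [ffun t => p (t.1.1, t.2, t.1.2)].

Definition pushS (S T X1 X2 : finType) (f : S -> T) (p : {ffun S * X1 * X2 -> R}) :
  {ffun T * X1 * X2 -> R} :=
  [ffun t => \sum_(s : S | f s == t.1.1) p (s, t.1.2, t.2)].

Definition pid_fun := forall S X1 X2 : finType, {ffun S * X1 * X2 -> R} -> R.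

Definition continuous_on_dists (F : pid_fun) : Prop :=
  forall (S X1 X2 : finType) (p : {ffun S * X1 * X2 -> R}), is_dist p ->
  forall e : R, 0 < e -> exists2 d : R, 0 < d &
    forall q : {ffun S * X1 * X2 -> R}, is_dist q ->
      (forall t, `|p t - q t| < d) -> `|F S X1 X2 q - F S X1 X2 p| < e.

(* nonnegative bivariate information decomposition.
   UI S X1 X2 p = UI(S; X1 \ X2); UI(S; X2 \ X1) is UI at the swapped distribution. *)
Record decomposition := Decomposition {
  SI : pid_fun;
  UI : pid_fun;
  CI : pid_fun;
  SI_ge0 : forall (S X1 X2 : finType) (p : {ffun S * X1 * X2 -> R}), is_dist p -> 0 <= SI p;
  UI_ge0 : forall (S X1 X2 : finType) (p : {ffun S * X1 * X2 -> R}), is_dist p -> 0 <= UI p;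
  CI_ge0 : forall (S X1 X2 : finType) (p : {ffun S * X1 * X2 -> R}), is_dist p -> 0 <= CI p;
  SI_cont : continuous_on_dists SI;
  UI_cont : continuous_on_dists UI;
  CI_cont : continuous_on_dists CI;
  decomp_joint : forall (S X1 X2 : finType) (p : {ffun S * X1 * X2 -> R}), is_dist p ->
    MI (margSX12 p) = SI p + CI p + UI p + UI (swap12 p);
  decomp_X1 : forall (S X1 X2 : finType) (p : {ffun S * X1 * X2 -> R}), is_dist p ->
    MI (margSX1 p) = SI p + UI p;
  decomp_X2 : forall (S X1 X2 : finType) (p : {ffun S * X1 * X2 -> R}), is_dist p ->
    MI (margSX2 p) = SI p + UI (swap12 p)
}.

(* There is a random variable X1' (values in the alphabet of X1), jointly
   distributed with (S, X1, X2), such that S - X2 - X1' is a Markov chain and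
   P_{S X1'} = P_{S X1}.  Q is the joint law of (S, X1, X2, X1'). *)
Definition garbling (S X1 X2 : finType) (p : {ffun S * X1 * X2 -> R}) : Prop :=
  exists Q : {ffun S * X1 * X2 * X1 -> R},
    [/\ is_dist Q,
        (forall s x1 x2, \sum_(y : X1) Q (s, x1, x2, y) = p (s, x1, x2)),
        (forall s x2 y,
           (\sum_(x1 : X1) Q (s, x1, x2, y)) *
           (\sum_(s' : S) \sum_(x1 : X1) \sum_(y' : X1) Q (s', x1, x2, y'))
         = (\sum_(x1 : X1) \sum_(y' : X1) Q (s, x1, x2, y')) *
           (\sum_(s' : S) \sum_(x1 : X1) Q (s', x1, x2, y))) &
        (forall s y,
           \sum_(x1 : X1) \sum_(x2 : X2) Q (s, x1, x2, y)
           = \sum_(x2 : X2) p (s, y, x2))].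

Definition blackwell (U : pid_fun) : Prop :=
  forall (S X1 X2 : finType) (p : {ffun S * X1 * X2 -> R}), is_dist p ->
    (U S X1 X2 p = 0 <-> garbling p).

Definition SIbar (D : decomposition) : pid_fun :=
  fun S X1 X2 p =>
    sup [set r : R | exists (T : finType) (f : S -> T), r = SI D (pushS f p)].

Definition UIbarstar (D : decomposition) : pid_fun :=
  fun S X1 X2 p => MI (margSX1 p) - SIbar D p.

End InfoDefs.

(** The counterexample: S = (a, b) is a pair of fair bits, X1 is a copy of a
    through a binary symmetric channel with crossover 1/4, and X2 is a if b = 0
    and an erasure symbol if b = 1.  The channel a -> X1 is a garbling of
    a -> X2 (a -> X2 is an erasure channel with erasure probability 1/2), so the
    Blackwell property of UI gives UI(a; X1 \ X2) = 0, i.e. SI(a; X1, X2) =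
    I(a; X1) = I(S; X1).  Since SI(f(S); X1, X2) <= I(f(S); X1) <= I(S; X1) for
    every f, this forces UIbar*(S; X1 \ X2) = 0.  Yet S -> X1 is not a garbling
    of S -> X2, because X2 carries no information about a when b = 1. *)

From HB Require Import structures.
From mathcomp Require Import all_boot all_order all_algebra.
From mathcomp Require Import boolp classical_sets reals exp.
From mathcomp Require Import ring lra.
Set Implicit Arguments. Unset Strict Implicit. Unset Printing Implicit Defensive.
Import Order.TTheory GRing.Theory Num.Theory.
Local Open Scope ring_scope.

Section Sums.
Variable R : realType.

Lemma sum_pair (A B : finType) (F : A * B -> R) :
  \sum_(z : A * B) F z = \sum_(a : A) \sum_(b : B) F (a, b).
Proof. by rewrite pair_bigA; apply: eq_bigr => -[]. Qed.

Lemma sum_option (A : finType) (F : option A -> R) :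
  \sum_(o : option A) F o = F None + \sum_(a : A) F (Some a).
Proof.
rewrite (bigD1 None) //=; congr (_ + _).
rewrite (reindex_omap Some id) //=; last by case.
by apply: eq_bigl => a; rewrite eqxx.
Qed.

Lemma ler_sum_term (I : finType) (P : pred I) (F : I -> R) j :
  (forall i, P i -> 0 <= F i) -> P j -> F j <= \sum_(i | P i) F i.
Proof.
move=> F_ge0 Pj; rewrite (bigD1 j) //= lerDl sumr_ge0 // => i /andP[+ _].
exact: F_ge0.
Qed.

End Sums.

Section DataProcessing.
Variable R : realType.

Lemma MIE (A B : finType) (q : {ffun A * B -> R}) :
  MI q = \sum_(ab : A * B)
           q ab * ln (q ab / ((\sum_b q (ab.1, b)) * (\sum_a q (a, ab.2)))).
Proof. by apply: eq_bigr => ab _; case: eqP => [->|]; rewrite ?mul0r. Qed.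

Lemma gibbs_inequality (I : finType) (p m : I -> R) :
  (forall i, 0 <= p i) -> (forall i, 0 <= m i) -> (forall i, 0 < p i -> 0 < m i) ->
  \sum_i m i <= \sum_i p i -> 0 <= \sum_i p i * ln (p i / m i).
Proof.
move=> p_ge0 m_ge0 m_gt0 le_mp.
apply: le_trans (_ : 0 <= \sum_i (p i - m i)) _; first by rewrite sumrB subr_ge0.
apply: ler_sum => i _; have [->|p_neq0] := eqVneq (p i) 0.
  by rewrite mul0r sub0r oppr_le0.
have p_gt0 : 0 < p i by rewrite lt0r p_neq0 p_ge0.
have mp_gt0 : 0 < m i / p i by rewrite divr_gt0 ?m_gt0.
have ln_mp : ln (m i / p i) <= m i / p i - 1.
  by have := @le_ln1Dx R (m i / p i - 1); rewrite (addrC 1) subrK; apply; lra.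
have pm : p i * (1 - m i / p i) = p i - m i by field; rewrite lt0r_neq0.
rewrite -invf_div lnV ?posrE // -pm ler_pM2l //.
by move: ln_mp; set t := m i / p i; lra.
Qed.

Definition pushX (S T X : finType) (f : S -> T) (q : {ffun S * X -> R}) :
  {ffun T * X -> R} := [ffun tx => \sum_(s | f s == tx.1) q (s, tx.2)].

Lemma sum_pushX_mul (S T X : finType) (f : S -> T) (q : {ffun S * X -> R})
    (g : T * X -> R) :
  \sum_(z : T * X) pushX f q z * g z = \sum_(w : S * X) q w * g (f w.1, w.2).
Proof.
rewrite !sum_pair exchange_big [RHS]exchange_big /=; apply: eq_bigr => x _.
rewrite [RHS](partition_big f xpredT) //=; apply: eq_bigr => t _.
by rewrite ffunE big_distrl /=; apply: eq_bigr => s /eqP <-.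
Qed.

Section PushFirst.
Variables (S T X : finType) (f : S -> T) (q : {ffun S * X -> R}).
Hypothesis q_ge0 : forall w, 0 <= q w.

Let q' := pushX f q.
Let r s := \sum_x q (s, x).
Let r' t := \sum_x q' (t, x).
Let c x := \sum_s q (s, x).

Let q'E t x : q' (t, x) = \sum_(s | f s == t) q (s, x).
Proof. by rewrite ffunE. Qed.

Let r_ge0 s : 0 <= r s. Proof. exact: sumr_ge0. Qed.

Let le_r_r' s : r s <= r' (f s).
Proof.
have -> : r' (f s) = \sum_(s' | f s' == f s) r s'.
  by rewrite /r' exchange_big; apply: eq_bigr => x _; rewrite q'E.
exact: ler_sum_term.
Qed.

Let marginals_gt0 s x :
  0 < q (s, x) -> [/\ 0 < r s, 0 < r' (f s), 0 < q' (f s, x) & 0 < c x].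
Proof.
move=> q_gt0; have r_gt0 : 0 < r s.
  exact: lt_le_trans q_gt0 (ler_sum_term (F := fun x' => q (s, x')) _ _).
split=> //; first exact: lt_le_trans r_gt0 (le_r_r' s).
  by rewrite q'E; apply: lt_le_trans q_gt0 (ler_sum_term (F := fun s' => q (s', x)) _ _).
exact: lt_le_trans q_gt0 (ler_sum_term (F := fun s' => q (s', x)) _ _).
Qed.

(* the law of S together with a fresh draw from the law of X given f(S);
   MI q - MI q' is the relative entropy of q with respect to it *)
Let m (w : S * X) := r w.1 * q' (f w.1, w.2) / r' (f w.1).

Let sum_m : \sum_w m w = \sum_w q w.
Proof.
rewrite !sum_pair; apply: eq_bigr => s _.
under eq_bigr do rewrite /m /= mulrAC.
rewrite -mulr_sumr -/(r' (f s)) -/(r s).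
have [r'_eq0|r'_neq0] := eqVneq (r' (f s)) 0; last by rewrite divfK.
by rewrite r'_eq0 mulr0; apply/le_anti; rewrite r_ge0 /= -r'_eq0 le_r_r'.
Qed.

Let MI_pushXE : MI q' = \sum_w q w * ln (q' (f w.1, w.2) / (r' (f w.1) * c w.2)).
Proof.
have col_q' x : \sum_t q' (t, x) = c x.
  by rewrite /c (partition_big f xpredT) //=; apply: eq_bigr => t _; rewrite q'E.
rewrite MIE -(sum_pushX_mul f q (fun z => ln (q' z / (r' z.1 * c z.2)))).
by apply: eq_bigr => -[t x] _; rewrite /= col_q'.
Qed.

Let MI_sub_pushX : MI q - MI q' = \sum_w q w * ln (q w / m w).
Proof.
rewrite MIE MI_pushXE -sumrB; apply: eq_bigr => -[s x] _ /=; rewrite -mulrBr.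
have [->|q_neq0] := eqVneq (q (s, x)) 0; first by rewrite !mul0r.
have q_gt0 : 0 < q (s, x) by rewrite lt0r q_neq0 q_ge0.
have [r_gt0 r'_gt0 q'_gt0 c_gt0] := marginals_gt0 q_gt0.
rewrite -ln_div ?posrE ?divr_gt0 ?mulr_gt0 // -/(r s) -/(c x) /m /=.
by congr (_ * ln _); field; rewrite !lt0r_neq0.
Qed.

Lemma MI_pushX_le : MI (pushX f q) <= MI q.
Proof.
rewrite -subr_ge0 MI_sub_pushX; apply: gibbs_inequality; rewrite ?sum_m //.
- by move=> w; rewrite /m divr_ge0 ?mulr_ge0 ?sumr_ge0 // => *; rewrite ffunE sumr_ge0.
- by case=> s x /marginals_gt0[*]; rewrite /m divr_gt0 ?mulr_gt0.
Qed.

End PushFirst.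

Lemma margSX1_pushS (S T X1 X2 : finType) (f : S -> T) (p : {ffun S * X1 * X2 -> R}) :
  margSX1 (pushS f p) = pushX f (margSX1 p).
Proof.
apply/ffunP => -[t x1]; rewrite !ffunE /=.
under eq_bigr do rewrite ffunE /=.
by rewrite exchange_big; apply: eq_bigr => s _; rewrite ffunE.
Qed.

Lemma is_dist_pushS (S T X1 X2 : finType) (f : S -> T) (p : {ffun S * X1 * X2 -> R}) :
  is_dist p -> is_dist (pushS f p).
Proof.
move=> [p_ge0 p_sum1]; split=> [z|]; first by rewrite ffunE sumr_ge0.
rewrite -p_sum1 !sum_pair exchange_big [RHS]exchange_big /=; apply: eq_bigr => x1 _.
rewrite exchange_big [RHS]exchange_big /=; apply: eq_bigr => x2 _.
rewrite [RHS](partition_big f xpredT) //=.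
by apply: eq_bigr => t _; rewrite ffunE.
Qed.

End DataProcessing.

Section SharedInformationBar.
Variables (R : realType) (D : decomposition R).

Lemma SI_pushS_le_MI (S T X1 X2 : finType) (f : S -> T) (p : {ffun S * X1 * X2 -> R}) :
  is_dist p -> SI D (pushS f p) <= MI (margSX1 p).
Proof.
move=> p_dist; have pf_dist := is_dist_pushS f p_dist.
apply: le_trans (_ : MI (margSX1 (pushS f p)) <= _).
  by rewrite (decomp_X1 D pf_dist) lerDl (UI_ge0 D pf_dist).
rewrite margSX1_pushS; apply: MI_pushX_le => -[s x1].
by rewrite ffunE sumr_ge0 // => x2 _; case: p_dist.
Qed.

Lemma UIbarstar_eq0 (S T X1 X2 : finType) (f : S -> T) (p : {ffun S * X1 * X2 -> R}) :
  is_dist p -> SI D (pushS f p) = MI (margSX1 p) -> UIbarstar D p = 0.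
Proof.
move=> p_dist SI_eq; apply/eqP; rewrite subr_eq0 eq_le; apply/andP; split.
  apply: ub_le_sup; last by exists T, f.
  by exists (MI (margSX1 p)) => _ [T' [g ->]]; exact: SI_pushS_le_MI.
apply: ge_sup; first by exists (SI D (pushS f p)), T, f.
by move=> _ [T' [g ->]]; exact: SI_pushS_le_MI.
Qed.

End SharedInformationBar.

Section ErasureExample.
Variable R : realType.

Definition bsc (a x : bool) : R := if x == a then 3/4 else 1/4.

Lemma bsc_gt0 a x : 0 < bsc a x.
Proof. by rewrite /bsc; case: ifP => _; lra. Qed.

Lemma bsc_sum_out a : bsc a true + bsc a false = 1.
Proof. by rewrite /bsc; case: a => /=; lra. Qed.

Lemma bsc_sum_in x : bsc true x + bsc false x = 1.
Proof. by rewrite /bsc; case: x => /=; lra. Qed.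

Definition erase (b a : bool) : option bool := if b then None else Some a.

Definition erasure_example : {ffun bool * bool * bool * option bool -> R} :=
  finfun (fun '(a, b, x1, x2) => 1/4 * bsc a x1 * (x2 == erase b a)%:R).

Definition erasure_example_fst (a x1 : bool) (x2 : option bool) : R :=
  1/4 * bsc a x1 * ((x2 == None)%:R + (x2 == Some a)%:R).

(* X1' is the unerased value of X2, or a fair coin after an erasure, so that
   P(X1' = a) = 1/2 + 1/2 * 1/2 = 3/4 as for X1. *)
Definition decode (x2 : option bool) (y : bool) : R :=
  if x2 is Some a then (y == a)%:R else 1/2.

Ltac sum_out := rewrite ?big_mkcond /=;
  do 4 (rewrite ?sum_pair /= ?big_bool /= ?sum_option /= ?big_bool /=).

Lemma erasure_exampleE a b x1 x2 :
  erasure_example (a, b, x1, x2) = 1/4 * bsc a x1 * (x2 == erase b a)%:R.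
Proof. by rewrite ffunE. Qed.

Lemma erasure_example_dist : is_dist erasure_example.
Proof.
split=> [[[[a b] x1] x2]|]; rewrite ?erasure_exampleE.
  by apply: mulr_ge0 (mulr_ge0 _ (ltW (bsc_gt0 _ _))) (ler0n _ _); lra.
by sum_out; rewrite !erasure_exampleE /bsc /=; lra.
Qed.

Lemma pushS_fst_erasure_example a x1 x2 :
  pushS fst erasure_example (a, x1, x2) = erasure_example_fst a x1 x2.
Proof.
rewrite ffunE /=; sum_out; rewrite !erasure_exampleE /erasure_example_fst /=.
by case: a; case: x2 => [[]|] /=; lra.
Qed.

(* For b = true the output X2 is erased, so the Markov chain S - X2 - X1' makes
   P(S = (a, true), X1' = true) independent of a, while P(S = (a, true), X1 = true)
   is not. *)
Lemma erasure_example_not_garbling : ~ garbling erasure_example.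
Proof.
move=> [Q [[Q_ge0 _] Q_marg Q_markov Q_SX1']].
have Q_erased a x1 b y : Q ((a, true), x1, Some b, y) = 0.
  have := Q_marg (a, true) x1 (Some b); rewrite erasure_exampleE mulr0.
  by move/(psumr_eq0P (fun y _ => Q_ge0 _)); apply.
pose G a := \sum_(x1 : bool) Q ((a, true), x1, None, true).
have GE a : G a = 1/4 * bsc a true.
  have := Q_SX1' (a, true) true; rewrite /G; sum_out.
  by rewrite !Q_erased !erasure_exampleE /=; lra.
have erased_mass a : \sum_x1 \sum_y Q ((a, true), x1, None, y) = 1/4.
  under eq_bigr do rewrite Q_marg.
  by sum_out; rewrite !erasure_exampleE /bsc /=; case: a => /=; lra.
have None_mass : \sum_s \sum_x1 \sum_y Q (s, x1, None, y) = 1/2.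
  under eq_bigr do under eq_bigr do rewrite Q_marg.
  by sum_out; rewrite !erasure_exampleE /bsc /=; lra.
pose M := \sum_s \sum_x1 Q (s, x1, None, true).
have markov a : G a * (1/2) = 1/4 * M.
  by rewrite -None_mass -(erased_mass a) Q_markov.
by have := markov true; have := markov false; rewrite !GE /bsc /=; lra.
Qed.

Definition decoded_garbling : {ffun bool * bool * option bool * bool -> R} :=
  finfun (fun '(a, x1, x2, y) => erasure_example_fst a x1 x2 * decode x2 y).

Lemma decoded_garblingE a x1 x2 y :
  decoded_garbling (a, x1, x2, y) = erasure_example_fst a x1 x2 * decode x2 y.
Proof. by rewrite ffunE. Qed.

Lemma garbling_pushS_fst : garbling (pushS fst erasure_example).
Proof.
exists decoded_garbling; split.
- split=> [[[[a x1] x2] y]|]; last first.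
    by sum_out; rewrite !decoded_garblingE /erasure_example_fst /decode /bsc /=; lra.
  rewrite decoded_garblingE /erasure_example_fst /decode /bsc.
  by case: a; case: x1; case: x2 => [[]|]; case: y => /=; lra.
- move=> a x1 x2; rewrite big_bool !decoded_garblingE pushS_fst_erasure_example.
  rewrite /erasure_example_fst /decode /bsc.
  by case: a; case: x1; case: x2 => [[]|] /=; lra.
- move=> a x2 y; sum_out; rewrite !decoded_garblingE /erasure_example_fst /decode /bsc.
  by case: a; case: x2 => [[]|]; case: y => /=; lra.
- move=> a y; sum_out; rewrite !decoded_garblingE !pushS_fst_erasure_example.
  by rewrite /erasure_example_fst /decode /bsc; case: a; case: y => /=; lra.
Qed.

Lemma margSX1_erasure_example a b x1 :
  margSX1 erasure_example (a, b, x1) = 1/4 * bsc a x1.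
Proof.
rewrite ffunE sum_option big_bool /= !erasure_exampleE /erase.
by case: b; case: a => /=; lra.
Qed.

Lemma margSX1_pushS_fst_erasure_example a x1 :
  margSX1 (pushS fst erasure_example) (a, x1) = 1/2 * bsc a x1.
Proof.
rewrite ffunE sum_option big_bool /= !pushS_fst_erasure_example /erasure_example_fst.
by case: a => /=; lra.
Qed.

Lemma MI_margSX1_pushS_fst :
  MI (margSX1 (pushS fst erasure_example)) = MI (margSX1 erasure_example).
Proof.
set pA := margSX1 (pushS fst erasure_example); set p := margSX1 erasure_example.
have rowA a : \sum_x pA (a, x) = 1/2.
  by rewrite big_bool /= !margSX1_pushS_fst_erasure_example; have := bsc_sum_out a; lra.
have colA x : \sum_a pA (a, x) = 1/2.
  by rewrite big_bool /= !margSX1_pushS_fst_erasure_example; have := bsc_sum_in x; lra.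
have row s : \sum_x p (s, x) = 1/4.
  case: s => a b; rewrite big_bool /= !margSX1_erasure_example.
  by have := bsc_sum_out a; lra.
have col x : \sum_s p (s, x) = 1/2.
  rewrite sum_pair /= !big_bool /= !margSX1_erasure_example.
  by have := bsc_sum_in x; lra.
transitivity (\sum_a \sum_x 1/2 * (bsc a x * ln (2 * bsc a x))).
  rewrite MIE sum_pair; apply: eq_bigr => a _; apply: eq_bigr => x _ /=.
  rewrite rowA colA margSX1_pushS_fst_erasure_example.
  have -> : 1/2 * bsc a x / (1/2 * (1/2)) = 2 * bsc a x by field.
  lra.
rewrite MIE sum_pair sum_pair; apply: eq_bigr => a _.
rewrite exchange_big; apply: eq_bigr => x _; rewrite big_bool /=.
rewrite !row !col !margSX1_erasure_example.
have -> : 1/4 * bsc a x / (1/4 * (1/2)) = 2 * bsc a x by field.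
lra.
Qed.

End ErasureExample.

Theorem theorem1 (R : realType) (D : decomposition R) :
  blackwell (UI D) -> ~ blackwell (UIbarstar D).
Proof.
move=> UI_blackwell UIbarstar_blackwell.
have p_dist := erasure_example_dist R.
have pA_dist := is_dist_pushS fst p_dist.
have UI_pA : UI D (pushS fst (erasure_example R)) = 0.
  by apply/(UI_blackwell _ _ _ _ pA_dist); exact: garbling_pushS_fst.
apply: (erasure_example_not_garbling (R := R)).
apply/(UIbarstar_blackwell _ _ _ _ p_dist); apply: (UIbarstar_eq0 (f := fst)) => //.
by rewrite -MI_margSX1_pushS_fst (decomp_X1 D pA_dist) UI_pA addr0.
Qed.
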